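(* Let $(A,P)$ be a complete filtered Rota--Baxter algebra of weight zero over a field $\mathbb{K}$ of characteristic zero, and let $a\in A_1$. Let $\chi_0:A_1\to A_1$ be the weight zero BCH-recursion, i.e. the map determined by $$\chi_0(a)=-\frac{\mathrm{ad}\,P(\chi_0(a))}{1-e^{\mathrm{ad}\,P(\chi_0(a))}}(a)=\sum_{n\ge0}\frac{B_n}{n!}\big(\mathrm{ad}\,P(\chi_0(a))\big)^n(a),$$ where $B_n$ are the Bernoulli numbers ($B_0=1$, $B_1=-1/2$, $B_2=1/6,\dots$) and $\mathrm{ad}\,u(v)=uv-vu$. Then: (1) the equation $x=1-P(x\,a)$ has the unique solution $x=\exp\big(-P(\chi_0(a))\big)$; (2) the equation $y=1+P(a\,y)$ has the unique solution $y=\exp\big(P(\chi_0(a))\big)$.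
   Context: A Rota--Baxter algebra of weight zero is an associative algebra $A$ with a linear map $P$ satisfying $P(x)P(y)=P(xP(y))+P(P(x)y)$ for all $x,y\in A$. A complete filtered Rota--Baxter algebra is one with a decreasing filtration $A=A_0\supseteq A_1\supseteq\cdots$ by ideals $A_n$ with $P(A_n)\subseteq A_n$, $A_mA_n\subseteq A_{m+n}$, and $A\cong\varprojlim A/A_n$. The map $\chi_0$ is the unique map $A_1\to A_1$ satisfying the displayed equation (determined inductively with respect to the filtration). *)

From HB Require Import structures.
From mathcomp Require Import all_boot all_order all_algebra.
Set Implicit Arguments. Unset Strict Implicit. Unset Printing Implicit Defensive.
Import Order.TTheory GRing.Theory Num.Theory.
Local Open Scope ring_scope.

(* Bernoulli numbers (convention B_1 = -1/2), via the standard recurrence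
   B_0 = 1,  B_n = -1/(n+1) * sum_{k<n} C(n+1,k) B_k. *)
Fixpoint bern_list (n : nat) : seq rat :=
  match n with
  | 0 => [:: 1]
  | n'.+1 => let l := bern_list n' in
      rcons l (- (n'.+2%:R)^-1 * \sum_(k < n'.+1) ('C(n'.+2, k))%:R * l`_k)
  end.
Definition bernoulli (n : nat) : rat := (bern_list n)`_n.

Section Filtered.
Variables (K : fieldType) (A : algType K).

(* The filtration A = A_0 ⊇ A_1 ⊇ ... is given by predicates F n. *)

Definition is_ideal (I : A -> Prop) : Prop :=
  [/\ I 0, (forall x y, I x -> I y -> I (x + y)),
      (forall (k : K) x, I x -> I (k *: x)),
      (forall x y, I y -> I (x * y)) & (forall x y, I x -> I (x * y))].

Definition fconverges (F : nat -> A -> Prop) (s : nat -> A) (L : A) : Prop :=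
  forall n, exists N, forall m, (N <= m)%N -> F n (L - s m).

Definition fseries (F : nat -> A -> Prop) (u : nat -> A) (L : A) : Prop :=
  fconverges F (fun N => \sum_(k < N) u k) L.

(* Completeness A ≅ lim A/A_n : the canonical map is injective (separated)
   and surjective (every compatible sequence, i.e. s (n+1) ≡ s n mod A_n,
   lifts to an element L with L ≡ s n mod A_n for all n). *)
Definition complete_filtered_RB0 (F : nat -> A -> Prop) (P : A -> A) : Prop :=
  [/\
      (forall x y, P x * P y = P (x * P y) + P (P x * y)),
      [/\ (forall x, F 0 x), (forall n x, F n.+1 x -> F n x) &
          (forall n, is_ideal (F n))],
      (forall n x, F n x -> F n (P x)),
      (forall m n x y, F m x -> F n y -> F (m + n) (x * y)) &
      [/\ (forall x, (forall n, F n x) -> x = 0) &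
          (forall s : nat -> A, (forall n, F n (s n.+1 - s n)) ->
             exists L, forall n, F n (L - s n))]].

Definition ad (u v : A) : A := u * v - v * u.

Definition exp_term (u : A) (k : nat) : A := ((k`!)%:R)^-1 *: u ^+ k.

Definition bch0_term (u b : A) (n : nat) : A :=
  (ratr (bernoulli n) / (n`!)%:R) *: iter n (ad u) b.

End Filtered.

(* Write w = chi0(a) and u = P(w).  The Bernoulli series defining w inverts the
   operator (e^(ad u) - 1)/ad u, so a = sum_m ad_u^m(w)/(m+1)!.  The Rota-Baxter
   identity gives u^(n+1) = P(sum_k u^k w u^(n-k)); rewriting this sandwich sum with
   ad_u identifies u^(n+1)/(n+1)! with P of the n-th term of the Cauchy product of
   a and exp(u), hence exp(u) = 1 + P(a exp(u)).  Since exp(-u) is the inverse of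
   exp(u), one more use of the Rota-Baxter identity turns this right equation into
   the left one for exp(-u).  Uniqueness: the difference d of two solutions
   satisfies d = P(a d) (resp. d = -P(d a)), which lies in every A_n. *)

From HB Require Import structures.
From mathcomp Require Import all_boot all_order all_algebra.
From mathcomp Require Import ring.
Set Implicit Arguments. Unset Strict Implicit. Unset Printing Implicit Defensive.
Import Order.TTheory GRing.Theory Num.Theory.
Local Open Scope ring_scope.

(* [ratr] is a ring morphism in characteristic zero; the library only provides
   this for [numFieldType]. *)
Section RatrPchar0.
Variable K : fieldType.
Hypothesis pchar0K : [pchar K] =i pred0.

Lemma intr_pchar0_eq0 (z : int) : (z%:~R == 0 :> K) = (z == 0).
Proof.
have natr_eq0 n : (n%:R == 0 :> K) = (n == 0)%N by rewrite ((pcharf0P _).1 pchar0K).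
by case: z => n; rewrite ?NegzE ?rmorphN ?oppr_eq0 /= ?pmulrn natr_eq0 // oppr_eq0.
Qed.

Lemma ratr_pchar0_frac (q : rat) (n d : int) :
  d != 0 -> q * d%:~R = n%:~R -> (ratr q : K) * d%:~R = n%:~R.
Proof.
move=> d_neq0 qd; have den_neq0 : (denq q)%:~R != 0 :> K.
  by rewrite intr_pchar0_eq0 denq_neq0.
have num_den : numq q * d = n * denq q.
  by apply: (@intr_inj rat); rewrite !rmorphM /= numqE -qd mulrAC.
by rewrite /ratr mulrAC -rmorphM num_den rmorphM mulfK.
Qed.

Lemma ratr_pchar0D : {morph (@ratr K) : x y / x + y}.
Proof.
move=> x y; set d := denq x * denq y.
have d_neq0 : d != 0 by rewrite mulf_neq0 ?denq_neq0.
have dK_neq0 : d%:~R != 0 :> K by rewrite intr_pchar0_eq0.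
apply: (mulIf dK_neq0); rewrite mulrDl.
rewrite (ratr_pchar0_frac (q := x) (n := numq x * denq y) d_neq0); last first.
  by rewrite !rmorphM /= numqE; ring.
rewrite (ratr_pchar0_frac (q := y) (n := numq y * denq x) d_neq0); last first.
  by rewrite !rmorphM /= numqE; ring.
rewrite (ratr_pchar0_frac (n := numq x * denq y + numq y * denq x) d_neq0).
  by rewrite rmorphD.
by rewrite !(rmorphD, rmorphM) /= !numqE; ring.
Qed.

Lemma ratr_pchar0_sum (I : Type) (r : seq I) (Q : pred I) (f : I -> rat) :
  ratr (\sum_(i <- r | Q i) f i) = \sum_(i <- r | Q i) (ratr (f i) : K).
Proof. exact: (big_morph _ ratr_pchar0D (ratr_nat K 0)). Qed.

Lemma ratr_pchar0Mn (x : rat) n : ratr (x *+ n) = ratr x *+ n :> K.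
Proof. by elim: n => [|n IHn]; rewrite ?(ratr_nat K 0) // !mulrS ratr_pchar0D IHn. Qed.

Lemma natr_fact_neq0 n : n`!%:R != 0 :> K.
Proof. by rewrite ((pcharf0P _).1 pchar0K) -lt0n fact_gt0. Qed.

Lemma natr_bin_fact n k : (k <= n)%N ->
  'C(n, k)%:R / n`!%:R = (k`!%:R)^-1 * ((n - k)`!%:R)^-1 :> K.
Proof.
move=> le_kn; rewrite -(bin_fact le_kn) !natrM.
have bin_neq0 : 'C(n, k)%:R != 0 :> K.
  by rewrite ((pcharf0P _).1 pchar0K) -lt0n bin_gt0.
by field; rewrite !natr_fact_neq0 bin_neq0.
Qed.

End RatrPchar0.

Lemma size_bern_list n : size (bern_list n) = n.+1.
Proof. by elim: n => //= n IHn; rewrite size_rcons IHn. Qed.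

Lemma nth_bern_list n k : (k <= n)%N -> (bern_list n)`_k = bernoulli k.
Proof.
elim: n => [|n IHn]; first by rewrite leqn0 => /eqP ->.
rewrite leq_eqVlt => /orP[/eqP -> // | lt_kn].
by rewrite /= nth_rcons size_bern_list lt_kn IHn.
Qed.

Lemma bernoulliS n : bernoulli n.+1 =
  - (n.+2%:R)^-1 * \sum_(k < n.+1) 'C(n.+2, k)%:R * bernoulli k.
Proof.
rewrite /bernoulli /= nth_rcons size_bern_list ltnn eqxx; congr (_ * _).
by apply: eq_bigr => k _; rewrite (@nth_bern_list n k (ltn_ord k)).
Qed.

Lemma sum_bin_bernoulli n :
  \sum_(j < n.+1) 'C(n.+1, j)%:R * bernoulli j = (n == 0)%:R.
Proof.
case: n => [|n]; first by rewrite big_ord1 /bernoulli /= mul1r.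
rewrite big_ord_recr /= bernoulliS binSn mulrA mulrN mulfV ?mulN1r ?subrr //.
by rewrite pnatr_eq0.
Qed.

Lemma bernoulli_convolution (K : fieldType) : [pchar K] =i pred0 -> forall n,
  \sum_(m < n.+1) (m.+1`!%:R)^-1 * (ratr (bernoulli (n - m)) / (n - m)`!%:R)
    = (n == 0)%:R :> K.
Proof.
move=> pchar0K n; rewrite (reindex_inj rev_ord_inj) /=.
transitivity
  ((n.+1`!%:R)^-1 * ratr (\sum_(j < n.+1) 'C(n.+1, j)%:R * bernoulli j) : K).
  rewrite ratr_pchar0_sum // mulr_sumr; apply: eq_bigr => -[j /= lt_jn] _.
  rewrite subKn // -subSn // subSS mulr_natl ratr_pchar0Mn // -(mulr_natr (ratr _)).
  rewrite [RHS]mulrCA [X in _ = _ * X]mulrC natr_bin_fact ?(ltnW lt_jn) //; ring.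
by case: n => [|n]; rewrite sum_bin_bernoulli ?ratr_nat ?invr1 ?mul1r ?mulr0.
Qed.

Section AlgebraIdentities.
Variables (K : fieldType) (A : algType K).
Implicit Types (u x y : A) (c : K).

Lemma adB u : {morph ad u : x y / x - y}.
Proof. by move=> x y; rewrite /ad mulrBr mulrBl !opprD addrACA. Qed.

Lemma adZ u c x : ad u (c *: x) = c *: ad u x.
Proof. by rewrite /ad -scalerAr -scalerAl scalerBr. Qed.

Lemma iter_adB m u : {morph iter m (ad u) : x y / x - y}.
Proof. by move=> x y; elim: m => //= m ->; rewrite adB. Qed.

Lemma iter_adZ m u c x : iter m (ad u) (c *: x) = c *: iter m (ad u) x.
Proof. by elim: m => //= m ->; rewrite adZ. Qed.

Lemma mul_ad_expr u x k :
  u * (x * u ^+ k) = ad u x * u ^+ k + x * u ^+ k.+1.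
Proof. by rewrite /ad mulrBl -!mulrA -exprS subrK mulrA. Qed.

Lemma sum_expr_sandwich u x n :
  \sum_(k < n.+1) u ^+ k * x * u ^+ (n - k) =
  \sum_(m < n.+1) (iter m (ad u) x * u ^+ (n - m)) *+ 'C(n.+1, m.+1).
Proof.
elim: n => [|n IHn]; first by rewrite !big_ord1 /= !expr0 mul1r mulr1.
rewrite big_ord_recl expr0 mul1r subn0.
under eq_bigr => k _ do rewrite /= subSS exprS -!mulrA (mulrA (u ^+ k)).
rewrite -mulr_sumr IHn mulr_sumr.
under eq_bigr => m _
  do rewrite mulrnAr mul_ad_expr -(subSn (ltnSE (ltn_ord m))) mulrnDl.
rewrite big_split /=.
under [RHS]eq_bigr => m _ do rewrite binS mulrnDr.
rewrite big_split /= [X in _ = X + _]big_ord_recr /= bin_small // mulr0n addr0.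
rewrite [X in _ = _ + X]big_ord_recl /= bin0 mulr1n subn0.
rewrite [RHS]addrCA [X in _ = _ + X]addrC.
by congr (_ + (_ + _)); apply: eq_bigr => i _; rewrite /bump add0n add1n subSS.
Qed.

Lemma exp_term0 x : exp_term x 0 = 1.
Proof. by rewrite /exp_term expr0 invr1 scale1r. Qed.

Section Pchar0.
Hypothesis pchar0K : [pchar K] =i pred0.

Lemma exp_termD_comm x y n : GRing.comm x y ->
  \sum_(m < n.+1) exp_term x m * exp_term y (n - m) = exp_term (x + y) n.
Proof.
move=> cxy; rewrite /exp_term exprDn_comm // scaler_sumr (reindex_inj rev_ord_inj).
apply: eq_bigr => -[m /= lt_mn] _; rewrite (subKn (ltnSE lt_mn)).
rewrite -scalerAl -scalerAr scalerA -scaler_nat scalerA; congr (_ *: _).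
by rewrite [RHS]mulrC (natr_bin_fact pchar0K (ltnSE lt_mn)) subSS mulrC.
Qed.

Section RotaBaxter.
Variable P : {linear A -> A}.
Hypothesis rbP : forall x y, P x * P y = P (x * P y) + P (P x * y).

Lemma rb_expr x n :
  P x ^+ n.+1 = P (\sum_(k < n.+1) P x ^+ k * x * P x ^+ (n - k)).
Proof.
elim: n => [|n IHn]; first by rewrite big_ord1 !expr0 expr1 mul1r mulr1.
rewrite exprSr {1}IHn rbP -IHn -linearD [in RHS]big_ord_recr /= subnn expr0 mulr1.
congr (P (_ + _)); rewrite mulr_suml; apply: eq_bigr => k _.
by rewrite (subSn (ltnSE (ltn_ord k))) exprSr mulrA.
Qed.

Lemma rb_exp_term x n : exp_term (P x) n.+1 = P (\sum_(m < n.+1)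
  (m.+1`!%:R^-1 *: iter m (ad (P x)) x) * exp_term (P x) (n - m)).
Proof.
rewrite /exp_term rb_expr sum_expr_sandwich -linearZ /= scaler_sumr.
congr (P _); apply: eq_bigr => m _.
rewrite -scalerAl -scalerAr scalerA -scaler_nat scalerA; congr (_ *: _).
by rewrite mulrC natr_bin_fact // subSS.
Qed.

End RotaBaxter.

End Pchar0.

End AlgebraIdentities.

Lemma sum_triangle (V : nmodType) (f : nat -> nat -> V) N :
  \sum_(n < N) \sum_(m < n.+1) f m (n - m)%N =
  \sum_(m < N) \sum_(j < N - m) f m j.
Proof.
elim: N => [|N IHN]; first by rewrite !big_ord0.
rewrite big_ord_recr /= IHN [in RHS]big_ord_recr /= subSnn big_ord1.
rewrite [X in _ + X]big_ord_recr /= subnn addrA -big_split /=.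
congr (_ + _); apply: eq_bigr => m _.
by rewrite (subSn (ltnW (ltn_ord m))) big_ord_recr.
Qed.

Section Filtration.
Variables (K : fieldType) (A : algType K).

Record complete_filtration (F : nat -> A -> Prop) : Prop := CompleteFiltration {
  filt_top : forall x, F 0 x;
  filt_decr : forall n x, F n.+1 x -> F n x;
  filt_ideal : forall n, is_ideal (F n);
  filt_mul : forall m n x y, F m x -> F n y -> F (m + n) (x * y);
  filt_sep : forall x, (forall n, F n x) -> x = 0;
  filt_complete : forall s : nat -> A, (forall n, F n (s n.+1 - s n)) ->
    exists L, forall n, F n (L - s n) }.

Lemma complete_filtered_RB0_filtration F P :
  complete_filtered_RB0 F P -> complete_filtration F.
Proof. by case=> _ [? ? ?] _ ? [? ?]; split. Qed.

Variable F : nat -> A -> Prop.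
Hypothesis cF : complete_filtration F.
Implicit Types (t s : nat -> A) (u v x y L : A).

Lemma filt0 n : F n 0. Proof. by case: (filt_ideal cF n). Qed.

Lemma filtD n x y : F n x -> F n y -> F n (x + y).
Proof. by case: (filt_ideal cF n) => _ + _ _ _; apply. Qed.

Lemma filtZ n (c : K) x : F n x -> F n (c *: x).
Proof. by case: (filt_ideal cF n) => _ _ + _ _; apply. Qed.

Lemma filtMl n x y : F n y -> F n (x * y).
Proof. by case: (filt_ideal cF n) => _ _ _ + _; apply. Qed.

Lemma filtMr n x y : F n x -> F n (x * y).
Proof. by case: (filt_ideal cF n) => _ _ _ _; apply. Qed.

Lemma filtN n x : F n x -> F n (- x).
Proof. by rewrite -scaleN1r; apply: filtZ. Qed.

Lemma filtB n x y : F n x -> F n y -> F n (x - y).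
Proof. by move=> Fx Fy; apply/filtD/filtN. Qed.

Lemma filt_subr n x y : F n (x - y) -> F n (y - x).
Proof. by move=> Fxy; rewrite -opprB; apply: filtN. Qed.

Lemma filt_subtrans n x y z : F n (x - y) -> F n (y - z) -> F n (x - z).
Proof. by move=> Fxy Fyz; rewrite -(subrKA y); apply: filtD. Qed.

Lemma filtW m n x : (m <= n)%N -> F n x -> F m x.
Proof.
move=> /subnK <-; elim: (n - m)%N => // k IHk Fx.
by apply/IHk/(filt_decr cF); rewrite -addSn.
Qed.

Lemma filt_sum n (I : Type) (r : seq I) (Q : pred I) (f : I -> A) :
  (forall i, Q i -> F n (f i)) -> F n (\sum_(i <- r | Q i) f i).
Proof. by move=> Ff; apply: (big_ind (F n)) => //; [apply: filt0 | apply: filtD]. Qed.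

Lemma filtX u k : F 1 u -> F k (u ^+ k).
Proof.
move=> Fu; elim: k => [|k IHk]; first exact: filt_top.
by rewrite exprS -add1n; exact: (filt_mul cF Fu IHk).
Qed.

Lemma filt_exp_term v k : F 1 v -> F k (exp_term v k).
Proof. by move=> Fv; apply/filtZ/filtX. Qed.

Lemma filt_iter_ad u x m k : F 1 u -> F k x -> F (m + k) (iter m (ad u) x).
Proof.
move=> Fu Fx; elim: m => //= m IHm; apply: filtB.
  by rewrite -add1n -addnA; exact: (filt_mul cF Fu IHm).
by rewrite addSn -addn1; exact: (filt_mul cF IHm Fu).
Qed.

Lemma filt_iter_ad0 u x m : F 1 u -> F m (iter m (ad u) x).
Proof.
by move=> Fu; rewrite -[m in F m]addn0; apply: filt_iter_ad Fu (filt_top cF x).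
Qed.

Lemma contraction_fixed_eq0 (T : A -> A) x :
  (forall n y, F n y -> F n.+1 (T y)) -> x = T x -> x = 0.
Proof.
move=> FT def_x; apply: (filt_sep cF); elim=> [|n Fx]; first exact: filt_top.
by rewrite def_x; apply: FT.
Qed.

Lemma contraction_fixed_unique (T : A -> A) b y1 y2 :
  {morph T : x y / x - y} -> (forall n x, F n x -> F n.+1 (T x)) ->
  y1 = b + T y1 -> y2 = b + T y2 -> y1 = y2.
Proof.
move=> TB FT def_y1 def_y2; apply/subr0_eq/(contraction_fixed_eq0 FT).
by rewrite TB {1}def_y1 {1}def_y2 opprD addrACA subrr add0r.
Qed.

Lemma fseriesP t L : (forall k, F k (t k)) ->
  fseries F t L <-> forall N, F N (L - \sum_(k < N) t k).
Proof.
move=> Ft; split=> [cvg_t N | tail_t n]; last first.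
  by exists n => m le_nm; apply: filtW le_nm (tail_t m).
have [M FM] := cvg_t N; set M' := maxn M N.
have := FM M' (leq_maxl M N).
rewrite -!(big_mkord xpredT) (@big_cat_nat _ _ _ N) ?leq_maxr //=.
move/filt_subtrans; apply; rewrite addrAC subrr add0r big_nat_cond.
by apply: filt_sum => k /andP[/andP[le_Nk _] _]; apply: filtW le_Nk (Ft k).
Qed.

Lemma filt_fseries n t L : (forall k, F n (t k)) -> fseries F t L -> F n L.
Proof.
move=> Ft /(_ n) [M /(_ M (leqnn M)) FL].
by rewrite -(subrK (\sum_(k < M) t k) L); apply: filtD FL (filt_sum _ _).
Qed.

Lemma fseries_unique t L1 L2 : fseries F t L1 -> fseries F t L2 -> L1 = L2.
Proof.
move=> cvg1 cvg2; apply/subr0_eq/(filt_sep cF) => n.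
have [M1 FM1] := cvg1 n; have [M2 FM2] := cvg2 n.
apply: (filt_subtrans (y := \sum_(k < maxn M1 M2) t k)); first exact/FM1/leq_maxl.
exact/filt_subr/FM2/leq_maxr.
Qed.

Lemma fseries_exists t : (forall k, F k (t k)) -> exists L, fseries F t L.
Proof.
move=> Ft; have [L tail_t] : exists L, forall n, F n (L - \sum_(k < n) t k).
  by apply: (filt_complete cF) => n; rewrite big_ord_recr /= addrC addrK.
by exists L; apply/fseriesP.
Qed.

Lemma eq_fseries t s L : t =1 s -> fseries F t L -> fseries F s L.
Proof.
move=> eq_ts cvg_t n; have [M FM] := cvg_t n; exists M => m /FM.
by under eq_bigr do rewrite eq_ts.
Qed.

Lemma fseries_morph (f : A -> A) t L : {morph f : x y / x - y} ->
  (forall n x, F n x -> F n (f x)) -> fseries F t L -> fseries F (f \o t) (f L).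
Proof.
move=> fB Ff cvg_t n; have [M FM] := cvg_t n; exists M => m /FM /Ff.
pose fA : {additive A -> A} := HB.pack f (GRing.isZmodMorphism.Build A A f fB).
by rewrite fB -[f]/(fA : A -> A) raddf_sum.
Qed.

Lemma fseries_delta t : (forall n, t n.+1 = 0) -> fseries F t (t 0%N).
Proof.
move=> t_eq0 n; exists 1%N => -[//|m] _.
rewrite big_ord_recl big1 => [|i _]; last by rewrite /= t_eq0.
by rewrite addr0 subrr; apply: filt0.
Qed.

Lemma fseriesS t L : fseries F (fun n => t n.+1) L -> fseries F t (t 0%N + L).
Proof.
move=> cvg_t n; have [M FM] := cvg_t n; exists M.+1 => -[//|m] le_Mm.
by rewrite big_ord_recl opprD addrACA subrr add0r; apply: FM.
Qed.

Lemma fseries_diag (f : nat -> nat -> A) (g : nat -> A) L :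
  (forall m j, F (m + j) (f m j)) ->
  (forall m, fseries F (f m) (g m)) -> fseries F g L ->
  fseries F (fun n => \sum_(m < n.+1) f m (n - m)%N) L.
Proof.
move=> Ff cvg_f cvg_g.
have Ff_j m j : F j (f m j) := filtW (leq_addl m j) (Ff m j).
have Fg m : F m (g m).
  by apply: filt_fseries (cvg_f m) => j; apply: filtW (leq_addr j m) (Ff m j).
apply/fseriesP => [n | N].
  by apply: filt_sum => m _; have := Ff m (n - m)%N; rewrite subnKC // -ltnS.
apply: filt_subtrans ((fseriesP _ Fg).1 cvg_g N) _.
apply: (filt_subtrans (y := \sum_(m < N) \sum_(j < N) f m j)).
  by rewrite -sumrB; apply: filt_sum => m _; apply: (fseriesP _ (Ff_j m)).1.
rewrite sum_triangle -sumrB; apply: filt_sum => m _.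
rewrite -!(big_mkord xpredT) (@big_cat_nat _ _ _ (N - m)) ?leq_subr //=.
rewrite addrAC subrr add0r big_nat_cond; apply: filt_sum => j /andP[/andP[le_j _] _].
by apply: filtW (Ff m j); rewrite -leq_subLR.
Qed.

Lemma fseries_cauchy t s L1 L2 :
  (forall k, F k (t k)) -> (forall k, F k (s k)) ->
  fseries F t L1 -> fseries F s L2 ->
  fseries F (fun n => \sum_(m < n.+1) t m * s (n - m)%N) (L1 * L2).
Proof.
move=> Ft Fs cvg_t cvg_s.
apply: (fseries_diag (f := fun m j => t m * s j) (g := fun m => t m * L2)).
- by move=> m j; exact: (filt_mul cF (Ft m) (Fs j)).
- move=> m; apply: (fseries_morph (f := fun x => t m * x)) cvg_s => [x y | n x].
    exact: mulrBr.
  exact: filtMl.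
apply: (fseries_morph (f := fun x => x * L2)) cvg_t => [x y | n x].
  exact: mulrBl.
exact: filtMr.
Qed.

Section Pchar0.
Hypothesis pchar0K : [pchar K] =i pred0.

Lemma fseries_expD_comm x y Ex Ey : GRing.comm x y -> F 1 x -> F 1 y ->
  fseries F (exp_term x) Ex -> fseries F (exp_term y) Ey ->
  fseries F (exp_term (x + y)) (Ex * Ey).
Proof.
move=> cxy Fx Fy cvg_x cvg_y.
have Fx_k k : F k (exp_term x k) by apply: filt_exp_term.
have Fy_k k : F k (exp_term y k) by apply: filt_exp_term.
apply: eq_fseries (fseries_cauchy Fx_k Fy_k cvg_x cvg_y) => n.
exact: exp_termD_comm.
Qed.

Lemma fseries_exp0 : fseries F (exp_term 0) 1.
Proof.
have := fseries_delta (t := exp_term 0) _; rewrite exp_term0; apply.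
by move=> n; rewrite /exp_term expr0n scaler0.
Qed.

Lemma fseries_exp_mulN v Ev Ew : F 1 v ->
  fseries F (exp_term v) Ev -> fseries F (exp_term (- v)) Ew -> Ev * Ew = 1.
Proof.
move=> Fv cvg_v cvg_Nv.
have := fseries_expD_comm (commrN (commr_refl v)) Fv (filtN Fv) cvg_v cvg_Nv.
by rewrite subrr => /fseries_unique; apply; apply: fseries_exp0.
Qed.

Lemma fseries_bch0_inverse u a w : F 1 u -> fseries F (bch0_term u a) w ->
  fseries F (fun m => m.+1`!%:R^-1 *: iter m (ad u) w) a.
Proof.
move=> Fu cvg_w; set g := fun m => _.
have Fg m : F m (g m) by apply/filtZ/filt_iter_ad0.
have [L cvg_g] := fseries_exists Fg.
pose c m j : K := m.+1`!%:R^-1 * (ratr (bernoulli j) / j`!%:R).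
have cvg_f m : fseries F (fun j => c m j *: iter (m + j) (ad u) a) (g m).
  have adB : {morph (fun x => m.+1`!%:R^-1 *: iter m (ad u) x) : x y / x - y}.
    by move=> x y; rewrite iter_adB scalerBr.
  have Fad_m n x : F n x -> F n (m.+1`!%:R^-1 *: iter m (ad u) x).
    by move=> Fx; apply/filtZ/(filtW (leq_addl m n))/filt_iter_ad.
  apply: eq_fseries (fseries_morph adB Fad_m cvg_w) => j.
  by rewrite /= /bch0_term iter_adZ scalerA -iterD.
have Ff m j : F (m + j) (c m j *: iter (m + j) (ad u) a).
  by apply/filtZ/filt_iter_ad0.
have cvg_a : fseries F (fun n => (n == 0)%:R *: iter n (ad u) a) L.
  apply: eq_fseries (fseries_diag Ff cvg_f cvg_g) => n.
  rewrite -(bernoulli_convolution pchar0K n) scaler_suml.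
  by apply: eq_bigr => m _; rewrite subnKC // -ltnS.
suff -> : a = L by [].
by rewrite (fseries_unique cvg_a (fseries_delta (fun n => scale0r _))) /= scale1r.
Qed.

End Pchar0.

End Filtration.

Section RotaBaxterSeries.
Variables (K : fieldType) (A : algType K).
Variables (F : nat -> A -> Prop) (P : {linear A -> A}).
Hypothesis cRB : complete_filtered_RB0 F P.

Let cF : complete_filtration F := complete_filtered_RB0_filtration cRB.
Let rbP x y : P x * P y = P (x * P y) + P (P x * y).
Proof. by case: cRB => rb _ _ _ _; apply: rb. Qed.
Let filtP n x : F n x -> F n (P x).
Proof. by case: cRB => _ _ FP _ _; apply: FP. Qed.

Lemma rb_exp_right (pchar0K : [pchar K] =i pred0) a w E :
  F 1 w -> fseries F (bch0_term (P w) a) w -> fseries F (exp_term (P w)) E ->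
  E = 1 + P (a * E).
Proof.
move=> Fw cvg_w cvg_E; have Fu : F 1 (P w) := filtP Fw.
have cvg_a := fseries_bch0_inverse cF pchar0K Fu cvg_w.
have Fg m : F m (m.+1`!%:R^-1 *: iter m (ad (P w)) w).
  by apply/(filtZ cF)/(filt_iter_ad0 cF).
have := fseries_cauchy cF Fg (fun k => filt_exp_term cF k Fu) cvg_a cvg_E.
move/(fseries_morph (raddfB P) filtP) => cvg_PaE.
have cvg_E' : fseries F (exp_term (P w)) (exp_term (P w) 0 + P (a * E)).
  by apply: fseriesS; apply: eq_fseries cvg_PaE => n; rewrite /= rb_exp_term.
by rewrite -(exp_term0 (P w)); exact: (fseries_unique cF cvg_E cvg_E').
Qed.

Lemma rb_left_of_right a E X : F 1 a ->
  E = 1 + P (a * E) -> X * E = 1 -> E * X = 1 -> X = 1 - P (X * a).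
Proof.
move=> Fa defE XE EX; set r := 1 - P (X * a) - X.
have PaE : P (a * E) = E - 1 by rewrite {2}defE addrAC subrr add0r.
(* [r E = P (r a E) = P (r E (X a E))]: [r E] is a fixed point of a contraction. *)
have rE : r * E = P (r * a * E).
  transitivity (P (a * E) - P (X * a) - P (X * a) * P (a * E)).
    by rewrite /r !mulrBl mul1r XE PaE mulrBr mulr1 opprB addrA subrK addrAC.
  rewrite rbP -linearD -!linearB; congr (P _).
  rewrite PaE /r !mulrBl !mulrBr mul1r mulr1 !mulrA.
  by rewrite opprD opprB !addrA subrK addrAC.
have rE0 : r * E = 0.
  apply: (contraction_fixed_eq0 cF (T := fun d => P (d * (X * a * E)))).
    move=> n d Fd; apply: filtP; rewrite -addn1.
    by apply: (filt_mul cF Fd); apply/(filtMr cF)/(filtMl cF).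
  by rewrite {1}rE !mulrA -(mulrA r E X) EX mulr1.
have r0 : r = 0 by rewrite -[r]mulr1 -EX mulrA rE0 mul0r.
exact/esym/subr0_eq.
Qed.

Lemma rb_right_unique a y1 y2 : F 1 a ->
  y1 = 1 + P (a * y1) -> y2 = 1 + P (a * y2) -> y1 = y2.
Proof.
move=> Fa; apply: (contraction_fixed_unique cF (T := fun y => P (a * y))).
  by move=> x y; rewrite /= mulrBr linearB.
by move=> n y Fy; apply: filtP; rewrite -add1n; apply: (filt_mul cF Fa Fy).
Qed.

Lemma rb_left_unique a x1 x2 : F 1 a ->
  x1 = 1 - P (x1 * a) -> x2 = 1 - P (x2 * a) -> x1 = x2.
Proof.
move=> Fa; apply: (contraction_fixed_unique cF (T := fun x => - P (x * a))).
  by move=> x y; rewrite /= mulrBl linearB opprD.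
by move=> n x Fx; apply/(filtN cF)/filtP; rewrite -addn1; apply: (filt_mul cF Fx Fa).
Qed.

End RotaBaxterSeries.

Theorem lemma2p15 (K : fieldType) (A : algType K)
  (F : nat -> A -> Prop) (P : {linear A -> A}) (chi0 : A -> A) (a : A) :
  [pchar K] =i pred0 ->
  complete_filtered_RB0 F P ->
  (* chi0 : A_1 -> A_1 is the weight zero BCH-recursion *)
  (forall b, F 1 b ->
     F 1 (chi0 b) /\ fseries F (bch0_term (P (chi0 b)) b) (chi0 b)) ->
  F 1 a ->
  (exists x, fseries F (exp_term (- P (chi0 a))) x /\
     x = 1 - P (x * a) /\ (forall x', x' = 1 - P (x' * a) -> x' = x)) /\
  (exists y, fseries F (exp_term (P (chi0 a))) y /\
     y = 1 + P (a * y) /\ (forall y', y' = 1 + P (a * y') -> y' = y)).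
Proof.
move=> pchar0K cRB bch_chi0 Fa; have cF := complete_filtered_RB0_filtration cRB.
have [Fw cvg_w] := bch_chi0 a Fa.
have Fu : F 1 (P (chi0 a)) by case: cRB => _ _ FP _ _; apply: FP.
have FNu := filtN cF Fu.
have [E cvg_E] := fseries_exists cF (fun k => filt_exp_term cF k Fu).
have [X cvg_X] := fseries_exists cF (fun k => filt_exp_term cF k FNu).
have defE := rb_exp_right cRB pchar0K Fw cvg_w cvg_E.
have EX := fseries_exp_mulN cF pchar0K Fu cvg_E cvg_X.
have XE : X * E = 1 by apply: (fseries_exp_mulN cF pchar0K FNu cvg_X); rewrite opprK.
have defX := rb_left_of_right cRB Fa defE XE EX.
split.
  exists X; split=> //; split=> // x' def_x'.
  exact: (rb_left_unique cRB Fa def_x' defX).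
exists E; split=> //; split=> // y' def_y'.
exact: (rb_right_unique cRB Fa def_y' defE).
Qed.
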